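(* Let $\mathcal{X}$ be a probability distribution over a set of queries, $k \geq 1$, and $\hat q_1,\dots,\hat q_k,\hat c_1,\dots,\hat c_k : \mathcal{X} \to \mathbb{R}$ measurable functions. Let $\Lambda$ be the set of $\lambda \in \mathbb{R}$ for which there exist $x \in \mathcal{X}$ and $i \neq j$ with $\hat q_i(x) - \lambda \hat c_i(x) = \hat q_j(x) - \lambda \hat c_j(x)$. Let $0 \leq \lambda_1 < \lambda_2$. If $[\lambda_1,\lambda_2] \cap \Lambda = \emptyset$, then $S_{\lambda_1} = S_{\lambda_2}$. Furthermore, if $[\lambda_1,\lambda_2] \cap \Lambda = \{\lambda^*\}$, then $S_\lambda \subseteq S_{\lambda^*}$ for all $\lambda \in [\lambda_1,\lambda_2]$.
   Context: A routing strategy is a measurable function $s : \mathcal{X} \to \mathbb{R}^k$ with $s_i(x) \geq 0$ for all $i$ and $\sum_{i=1}^k s_i(x) = 1$ for all $x$. For $\lambda \in \mathbb{R}^+$, $S_\lambda$ is the set of routing strategies $s$ such that for all $x \in \mathcal{X}$ and $i \in \{1,\dots,k\}$: if $\hat q_i(x) - \lambda \hat c_i(x) < \max_j(\hat q_j(x) - \lambda \hat c_j(x))$ then $s_i(x) = 0$. *)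

From HB Require Import structures.
From mathcomp Require Import all_boot all_order all_algebra.
From mathcomp Require Import all_classical all_reals all_analysis.
Set Implicit Arguments. Unset Strict Implicit. Unset Printing Implicit Defensive.
Import Order.TTheory GRing.Theory Num.Theory.
Local Open Scope classical_set_scope.
Local Open Scope ring_scope.

Section Routing.
Context (d : measure_display) (T : measurableType d) (R : realType) (k : nat).

Definition score (qhat chat : 'I_k -> T -> R) (lam : R) (i : 'I_k) (x : T) : R :=
  qhat i x - lam * chat i x.

(* max_j v j, computed as a fold of Num.max over all j seeded with v i0
   (any element of the family; since v i0 is itself among the v j, this is
   exactly the maximum over the nonempty index set). *)
Definition maxval (v : 'I_k -> R) (i0 : 'I_k) : R :=
  \big[Num.max/v i0]_(j < k) v j.

Definition routing_strategy (s : 'I_k -> T -> R) : Prop :=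
  (forall i, measurable_fun setT (s i)) /\
  (forall x i, 0 <= s i x) /\
  (forall x, \sum_(i < k) s i x = 1).

Definition S_lam (qhat chat : 'I_k -> T -> R) (lam : R) : set ('I_k -> T -> R) :=
  [set s | routing_strategy s /\
     forall x i, score qhat chat lam i x < maxval (fun j => score qhat chat lam j x) i ->
                 s i x = 0].

Definition tie_set (qhat chat : 'I_k -> T -> R) : set R :=
  [set lam | exists x i j, i != j /\ score qhat chat lam i x = score qhat chat lam j x].

End Routing.

(* For a fixed query x, the score difference of two models is an affine function of the
   tradeoff lam, so it cannot change sign on an interval without vanishing there, i.e.
   without a tie.  Membership in S_lam only depends on which models are strictly beaten
   at each x.  Without ties in [lam1, lam2], strict dominance is the same for all lam of
   the interval, so S_lam1 = S_lam2.  If lamstar is the only tie, a strict dominance at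
   lamstar persists to every lam of the interval (a sign change would need a second tie),
   so every constraint defining S_lamstar is also a constraint of S_lam. *)

From HB Require Import structures.
From mathcomp Require Import all_boot all_order all_algebra.
From mathcomp Require Import all_classical all_reals all_analysis.
From mathcomp Require Import lra.
Set Implicit Arguments. Unset Strict Implicit. Unset Printing Implicit Defensive.
Import Order.TTheory GRing.Theory Num.Theory.
Local Open Scope classical_set_scope.
Local Open Scope ring_scope.

Lemma maxval_lt (R : realType) (k : nat) (v : 'I_k -> R) (i0 i : 'I_k) :
  v i < maxval v i0 <-> exists j, v i < v j.
Proof.
rewrite /maxval ltNge; split => [/negP not_le | [j ltij]].
  apply: contrapT => /forallNP no_gt; apply: not_le; apply/bigmax_leP.
  by split => [|j _]; rewrite leNgt; apply/negP; apply: no_gt.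
by apply/negP => /bigmax_leP[_ /(_ j isT)]; rewrite leNgt ltij.
Qed.

Lemma affine_root_in_interval (R : realFieldType) (I : set R) (a b l m : R) :
  is_interval I -> I l -> I m -> 0 < a - l * b -> a - m * b <= 0 ->
  exists2 mu, I mu & a - mu * b = 0.
Proof.
move=> itvI Il Im gt0_l le0_m.
have b_neq0 : b != 0 by apply/eqP => b0; move: gt0_l le0_m; rewrite b0; lra.
exists (a / b); last by rewrite divfK // subrr.
have : a / b * b = a by rewrite divfK.
move: (a / b) => mu mub.
have between : (l <= mu <= m) || (m <= mu <= l).
  by case: (ltgtP b 0) b_neq0 => // [b_lt0 | b_gt0] _; apply/orP;
    [right | left]; apply/andP; split; nra.
by case/orP: between => [/(itvI _ _ Il Im) | /(itvI _ _ Im Il)].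
Qed.

Section Routing.
Variables (d : measure_display) (T : measurableType d) (R : realType) (k : nat).
Variables (qhat chat : 'I_k -> T -> R).

Lemma score_lt_transfer (I : set R) (l m : R) (x : T) (i j : 'I_k) :
  is_interval I -> I l -> I m ->
  (forall mu, I mu -> tie_set qhat chat mu -> mu = l) ->
  score qhat chat l i x < score qhat chat l j x ->
  score qhat chat m i x < score qhat chat m j x.
Proof.
move=> itvI Il Im ties_at_l lt_l; rewrite ltNge; apply/negP => ge_m.
have gt0_l : 0 < (qhat j x - qhat i x) - l * (chat j x - chat i x).
  by move: lt_l; rewrite /score; lra.
have le0_m : (qhat j x - qhat i x) - m * (chat j x - chat i x) <= 0.
  by move: ge_m; rewrite /score; lra.
have [mu Imu tie] := affine_root_in_interval itvI Il Im gt0_l le0_m.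
have neq_ij : i != j by apply: contraTneq lt_l => ->; rewrite ltxx.
have mu_l : mu = l.
  by apply: ties_at_l => //; exists x, i, j; split => //; rewrite /score; lra.
by move: lt_l tie; rewrite mu_l /score; lra.
Qed.

Lemma S_lam_subset (l m : R) :
  (forall x i j, score qhat chat m i x < score qhat chat m j x ->
                 score qhat chat l i x < score qhat chat l j x) ->
  S_lam qhat chat l `<=` S_lam qhat chat m.
Proof.
move=> lt_ml s [rs beaten0]; split => // x i /maxval_lt[j lt_ij].
by apply: beaten0; apply/maxval_lt; exists j; apply: lt_ml.
Qed.

End Routing.

Theorem lemma4 (d : measure_display) (T : measurableType d) (R : realType)
  (P : probability T R) (k : nat) (hk : (1 <= k)%N)
  (qhat chat : 'I_k -> T -> R)
  (mq : forall i, measurable_fun setT (qhat i))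
  (mc : forall i, measurable_fun setT (chat i))
  (lam1 lam2 : R) (h0 : 0 <= lam1) (h12 : lam1 < lam2) :
  (`[lam1, lam2] `&` tie_set qhat chat = set0 ->
     S_lam qhat chat lam1 = S_lam qhat chat lam2) /\
  (forall lamstar : R, `[lam1, lam2] `&` tie_set qhat chat = [set lamstar] ->
     forall lam : R, lam \in `[lam1, lam2] ->
       S_lam qhat chat lam `<=` S_lam qhat chat lamstar).
Proof.
have itv : is_interval [set` `[lam1, lam2]] := @interval_is_interval _ _.
split => [no_tie | lamstar one_tie lam lamI].
  have S_sub l m : l \in `[lam1, lam2] -> m \in `[lam1, lam2] ->
      S_lam qhat chat l `<=` S_lam qhat chat m.
    move=> lI mI; apply: S_lam_subset => x i j.
    apply: score_lt_transfer itv mI lI _ => mu muI tie.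
    by have : (`[lam1, lam2] `&` tie_set qhat chat) mu by []; rewrite no_tie.
  have [lam1I lam2I] : lam1 \in `[lam1, lam2] /\ lam2 \in `[lam1, lam2].
    by rewrite !in_itv /= !lexx ltW.
  by apply/seteqP; split; apply: S_sub.
have [lamstarI _] : (`[lam1, lam2] `&` tie_set qhat chat) lamstar by rewrite one_tie.
apply: S_lam_subset => x i j; apply: score_lt_transfer itv lamstarI lamI _.
by move=> mu muI tie; have : (`[lam1, lam2] `&` tie_set qhat chat) mu by []; rewrite one_tie.
Qed.
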